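(* Let $\Sigma$ be a finite alphabet, $\mathcal F\subseteq\Sigma^{\Sigma^*}$ a base class and $T\in\mathbb N_+$. If $\Sigma=\{0,1\}$, then $\mathrm{VCdim}(\mathcal F^{\mathrm{e2e}(T)})\le6\,T\cdot\mathrm{VCdim}(\mathcal F)$. For non-binary finite $\Sigma$, $$\mathrm{Ndim}(\mathcal F^{\mathrm{e2e}(T)})\le9\,T\cdot\mathrm{Ndim}(\mathcal F)\log_2\!\left(\frac{2\,\mathrm{Ndim}(\mathcal F)\,|\Sigma|}{e\ln2}\right).$$
   Context: For $f:\Sigma^*\to\Sigma$, $\bar f(\mathbf x)$ is $\mathbf x$ with $f(\mathbf x)$ appended; $f^{\mathrm{CoT}(T)}=\bar f^{\circ T}$; $f^{\mathrm{e2e}(T)}(\mathbf x)$ is the last token of $f^{\mathrm{CoT}(T)}(\mathbf x)$; $\mathcal F^{\mathrm{e2e}(T)}=\{f^{\mathrm{e2e}(T)}:f\in\mathcal F\}$ (classes of functions on $\Sigma^*$). $\mathrm{VCdim}$ is the VC dimension. Natarajan dimension $\mathrm{Ndim}(\mathcal H)$: the largest size of a set $S$ for which there are $h_0,h_1$ with $h_0(\mathbf x)\ne h_1(\mathbf x)$ for all $\mathbf x\in S$ such that for every $U\subseteq S$ some $h\in\mathcal H$ agrees with $h_0$ on $U$ and with $h_1$ on $S\setminus U$. *)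

From mathcomp Require Import all_boot.
From Stdlib Require Export Reals.
Set Implicit Arguments. Unset Strict Implicit. Unset Printing Implicit Defensive.

Section CoT.
Variable Sigma : eqType.

Definition fbar (f : seq Sigma -> Sigma) (x : seq Sigma) : seq Sigma :=
  rcons x (f x).

Definition CoT (f : seq Sigma -> Sigma) (T : nat) : seq Sigma -> seq Sigma :=
  iter T (fbar f).

(* f^{e2e(T)}(x) = last token of f^{CoT(T)}(x)  (nonempty when T >= 1;
   the default value f x is never used then) *)
Definition e2e (f : seq Sigma -> Sigma) (T : nat) (x : seq Sigma) : Sigma :=
  last (f x) (CoT f T x).

Definition e2e_class (F : (seq Sigma -> Sigma) -> Prop) (T : nat)
  : (seq Sigma -> Sigma) -> Prop :=
  fun g => exists f, F f /\ g = e2e f T.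
End CoT.

Section Dims.
Variable X : eqType.

Definition VC_shatters (H : (X -> bool) -> Prop) (S : seq X) : Prop :=
  forall U : pred X, exists h, H h /\ forall x, x \in S -> h x = U x.

Definition VCdim_eq (H : (X -> bool) -> Prop) (d : nat) : Prop :=
  (exists S, uniq S /\ size S = d /\ VC_shatters H S) /\
  (forall S, uniq S -> VC_shatters H S -> (size S <= d)%N).

Definition VCdim_le (H : (X -> bool) -> Prop) (d : nat) : Prop :=
  forall S, uniq S -> VC_shatters H S -> (size S <= d)%N.

Variable Y : eqType.

Definition N_shatters (H : (X -> Y) -> Prop) (S : seq X) : Prop :=
  exists h0 h1 : X -> Y,
    (forall x, x \in S -> h0 x <> h1 x) /\
    forall U : pred X, exists h, H h /\
      (forall x, x \in S -> U x -> h x = h0 x) /\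
      (forall x, x \in S -> ~~ U x -> h x = h1 x).

Definition Ndim_eq (H : (X -> Y) -> Prop) (d : nat) : Prop :=
  (exists S, uniq S /\ size S = d /\ N_shatters H S) /\
  (forall S, uniq S -> N_shatters H S -> (size S <= d)%N).
End Dims.

Definition log2 (x : R) : R := (ln x / ln 2)%R.

(* The output of f^{e2e(T)} on x only depends on the values of f at the strings x ++ w with
   |w| < T.  Hence on a set S of m points every labelling realised by F^{e2e(T)} is the image
   of a pattern of F on the n <= m |Σ|^T strings extending points of S.  By Natarajan's
   Sauer-Shelah type lemma, F has at most \sum_(i <= d) 'C(n, i) 'C(|Σ|, 2)^i patterns there,
   so shattering S forces 2^m <= \sum_(i <= d) 'C(n, i) K^i, K = 'C(|Σ|, 2).  Multiplying by
   x^d with x = d / (K n) and using 1 + t <= e^t gives m ln 2 <= d (1 + ln (K n / d)); then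
   ln y <= y - 1 at y = m / (4 d) absorbs the ln m, leaving m <= 6 T d for Σ = {0,1} and
   m ln 2 <= 9 T d ln |Σ| in general. *)

From Stdlib Require Import Reals Lra.
From mathcomp Require Import all_boot zify boolp.

(* [mathcomp.boot.nmodule] rebinds the [%R] key to [ring_scope]. *)
Delimit Scope R_scope with R.
Set Implicit Arguments. Unset Strict Implicit. Unset Printing Implicit Defensive.

Lemma tuple_head_behead_inj n T (t t' : n.+1.-tuple T) :
  thead t = thead t' -> behead_tuple t = behead_tuple t' -> t = t'.
Proof.
case/tupleP: t => x p; case/tupleP: t' => x' p'; rewrite !theadE => ->.
by move/(congr1 val) => /= pp'; apply: val_inj; rewrite /= pp'.
Qed.

(* [natarajan_bound K n D = \sum_(i < D) 'C(n, i) * K ^ i]. *)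
Fixpoint natarajan_bound (K n D : nat) {struct n} : nat :=
  if D is D'.+1 then
    if n is n'.+1 then natarajan_bound K n' D + K * natarajan_bound K n' D' else 1
  else 0.

Lemma natarajan_bound0 K n : natarajan_bound K n 0 = 0.
Proof. by case: n. Qed.

Lemma natarajan_bound1 K n : natarajan_bound K n 1 = 1.
Proof. by elim: n => //= n ->; rewrite natarajan_bound0 muln0. Qed.

Lemma leq_natarajan_bound K D : {homo natarajan_bound K ^~ D : n n' / n <= n'}.
Proof.
apply: homo_leq => [//|m p q /leq_trans|n]; first exact.
by case: D => [|D] /=; rewrite ?natarajan_bound0 ?leq_addr.
Qed.

Section NatarajanLemma.
Variable Y : finType.

Definition tuple_Nshatters n (A : {set n.-tuple Y}) (I : {set 'I_n}) : Prop :=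
  exists h0 h1 : n.-tuple Y, (forall i, i \in I -> tnth h0 i <> tnth h1 i) /\
    forall U : {set 'I_n}, exists2 a, a \in A &
      forall i, i \in I -> tnth a i = (if i \in U then tnth h0 i else tnth h1 i).

Definition pairs := [set s : {set Y} | #|s| == 2].

Definition fiber2 n (A : {set n.+1.-tuple Y}) (s : {set Y}) : {set n.-tuple Y} :=
  [set p : n.-tuple Y | [forall c in s, [tuple of c :: p] \in A]].

Lemma card_pairs : #|pairs| = 'C(#|Y|, 2).
Proof. exact: card_draws. Qed.

Lemma tuple_Nshatters_set0 n (A : {set n.-tuple Y}) : A != set0 -> tuple_Nshatters A set0.
Proof.
case/set0Pn=> a aA; exists a, a; split=> [i|U]; first by rewrite inE.
by exists a => // i; rewrite inE.
Qed.

Lemma tuple_Nshatters_behead n (A : {set n.+1.-tuple Y}) I :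
  tuple_Nshatters [set behead_tuple t | t in A] I ->
  tuple_Nshatters A (lift ord0 @: I).
Proof.
case=> h0 [h1 [h01 shA]].
have [_ /imsetP[t _ _] _] := shA set0; pose c := thead t.
exists [tuple of c :: h0], [tuple of c :: h1]; split=> [_ /imsetP[i iI ->]|U].
  by rewrite !tnthS; apply: h01.
have [_ /imsetP[u uA ->] shU] := shA [set i | lift ord0 i \in U].
exists u => // _ /imsetP[i iI ->].
by rewrite [u]tuple_eta !tnthS shU // inE.
Qed.

Lemma tuple_Nshatters_fiber2 n (A : {set n.+1.-tuple Y}) s I :
  s \in pairs -> tuple_Nshatters (fiber2 A s) I ->
  tuple_Nshatters A (ord0 |: lift ord0 @: I).
Proof.
rewrite inE => /cards2P[a [b [ab ->]]] [h0 [h1 [h01 shA]]].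
exists [tuple of a :: h0], [tuple of b :: h1]; split.
  move=> _ /setU1P[-> | /imsetP[i iI ->]]; first by apply/eqP.
  by rewrite !tnthS; apply: h01.
move=> U; have [p + shU] := shA [set i | lift ord0 i \in U].
rewrite inE => /forall_inP pA.
exists (if ord0 \in U then [tuple of a :: p] else [tuple of b :: p]).
  by case: ifP => _; apply: pA; rewrite !inE eqxx ?orbT.
move=> _ /setU1P[-> | /imsetP[i iI ->]]; first by case: ifP.
by case: ifP => _; rewrite !tnthS shU // inE.
Qed.

(* A tuple whose head is not the first admissible head of its tail is determined by its
   tail together with the pair of these two heads. *)
Section HeadSplit.
Variables (n : nat) (A : {set n.+1.-tuple Y}).

Definition first_head (p : n.-tuple Y) : option Y := [pick c | [tuple of c :: p] \in A].

Let first_head_tuples :=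
  [set t : n.+1.-tuple Y | first_head (behead_tuple t) == Some (thead t)].

Lemma first_headP t : t \in A ->
  exists2 c, first_head (behead_tuple t) = Some c & [tuple of c :: behead_tuple t] \in A.
Proof.
rewrite /first_head => tA; case: pickP => [c cA | noA]; first by exists c.
by have := noA (thead t); rewrite -tuple_eta tA.
Qed.

Lemma card_first_head_tuples :
  #|A :&: first_head_tuples| <= #|[set behead_tuple t | t in A]|.
Proof.
rewrite -(card_in_imset (f := @behead_tuple n.+1 Y)).
  exact/subset_leq_card/imsetS/subsetIl.
move=> t t' /setIP[_ tG] /setIP[_ t'G] tt'; apply: (tuple_head_behead_inj _ tt').
apply: Some_inj; move: tG t'G; rewrite !inE => /eqP <- /eqP <-; exact: congr1 tt'.
Qed.

Lemma card_other_head_tuples :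
  #|A :\: first_head_tuples| <= \sum_(s in pairs) #|fiber2 A s|.
Proof.
pose f (t : n.+1.-tuple Y) : {set Y} * n.-tuple Y :=
  ([set odflt (thead t) (first_head (behead_tuple t)); thead t], behead_tuple t).
have f_inj : {in A :\: first_head_tuples &, injective f}.
  move=> t t' /setDP[tA tG] /setDP[_ t'G] /pair_equal_spec[ftt' tt'].
  apply: (tuple_head_behead_inj _ tt').
  have [c tc _] := first_headP tA; have tc' := etrans (esym (congr1 first_head tt')) tc.
  move: tG t'G ftt'; rewrite !inE tc tc' /= => ct ct' /setP/(_ (thead t)).
  rewrite !inE eqxx orbT => /esym/orP[/eqP tc0 | /eqP //].
  by rewrite tc0 eqxx in ct.
have -> : \sum_(s in pairs) #|fiber2 A s| =
    #|[set sp | (sp.1 \in pairs) && (sp.2 \in fiber2 A sp.1)]|.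
  rewrite -sum1dep_card -(pair_big_dep (mem pairs) (fun s => mem (fiber2 A s)) (fun _ _ => 1)).
  by apply: eq_bigr => s _; rewrite sum1_card.
rewrite -(card_in_imset f_inj); apply/subset_leq_card/subsetP => _ /imsetP[t /setDP[tA tG] ->].
have [c tc ctA] := first_headP tA; move: tG; rewrite !inE /= tc /= => ct.
rewrite cards2 ct /=; apply/forall_inP => c0; rewrite !inE => /orP[/eqP-> // | /eqP->].
by rewrite -tuple_eta.
Qed.

Lemma card_head_split :
  #|A| <= #|[set behead_tuple t | t in A]| + \sum_(s in pairs) #|fiber2 A s|.
Proof.
rewrite -(cardsID first_head_tuples).
by rewrite leq_add ?card_first_head_tuples ?card_other_head_tuples.
Qed.

End HeadSplit.

Lemma card_le_natarajan_bound K n D (A : {set n.-tuple Y}) : #|pairs| <= K ->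
  (forall I, tuple_Nshatters A I -> #|I| < D) -> #|A| <= natarajan_bound K n D.
Proof.
move=> HK; elim: n D A => [|n IH] [|D] A shA /=.
1,3: by rewrite leqn0 cards_eq0; apply: contraT => /tuple_Nshatters_set0/shA; rewrite cards0.
  by apply: leq_trans (max_card A) _; rewrite card_tuple expn0.
apply: leq_trans (card_head_split A) _; apply: leq_add.
  apply: IH => I /tuple_Nshatters_behead/shA; rewrite card_imset //; exact: lift_inj.
have fiberD s : s \in pairs -> #|fiber2 A s| <= natarajan_bound K n D.
  move=> sP; apply: IH => I /(tuple_Nshatters_fiber2 sP)/shA.
  have ord0_lift : ord0 \notin [set lift ord0 i | i in I].
    by apply/imsetP => -[i _ /eqP]; rewrite (negbTE (neq_lift _ _)).
  by rewrite cardsU1 ord0_lift card_imset //; exact: lift_inj.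
by rewrite (leq_trans (leq_sum _ fiberD)) // sum_nat_const leq_mul2r HK orbT.
Qed.

End NatarajanLemma.

Section ChainOfThoughtLocality.
Variable Sigma : eqType.
Implicit Types (f g : seq Sigma -> Sigma) (x : seq Sigma).

Lemma CoTS f T x : CoT f T.+1 x = rcons (CoT f T x) (f (CoT f T x)).
Proof. by []. Qed.

Lemma e2eS f T x : e2e f T.+1 x = f (CoT f T x).
Proof. by rewrite /e2e CoTS last_rcons. Qed.

Lemma CoT_extends f T x : exists2 w, CoT f T x = x ++ w & size w = T.
Proof.
elim: T => [|T [w Ew sw]]; first by exists [::]; rewrite ?cats0.
by exists (rcons w (f (x ++ w))); rewrite ?CoTS ?Ew ?rcons_cat ?size_rcons ?sw.
Qed.

Lemma CoT_local f g T x :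
  (forall w, size w < T -> f (x ++ w) = g (x ++ w)) -> CoT f T x = CoT g T x.
Proof.
elim: T => // T IH fg; have {}IH : CoT f T x = CoT g T x by apply: IH => w /ltnW/fg.
have [w Ew sw] := CoT_extends f T x.
by rewrite !CoTS -IH Ew fg ?sw.
Qed.

Lemma e2e_local f g T x : 0 < T ->
  (forall w, size w < T -> f (x ++ w) = g (x ++ w)) -> e2e f T x = e2e g T x.
Proof.
case: T => // T _ fg; have [w Ew sw] := CoT_extends f T x.
by rewrite !e2eS -(CoT_local (fun w sw => fg w (ltnW sw))) Ew fg ?sw.
Qed.

End ChainOfThoughtLocality.

Definition Ndim_le (X Y : eqType) (H : (X -> Y) -> Prop) (d : nat) : Prop :=
  forall S, uniq S -> N_shatters H S -> size S <= d.

Section Patterns.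
Variable Sigma : finType.

Fixpoint words (j : nat) : seq (seq Sigma) :=
  if j is j'.+1 then [::] :: [seq c :: w | c <- enum Sigma, w <- words j'] else [::].

Lemma mem_words j w : size w < j -> w \in words j.
Proof.
elim: j w => // j IH [|c w] sw; rewrite inE //; apply/orP; right.
by apply: allpairs_f; [rewrite mem_enum | exact: IH].
Qed.

Lemma size_words j : 1 < #|Sigma| -> size (words j) < #|Sigma| ^ j.
Proof.
move=> k2; elim: j => //= j sK; rewrite size_allpairs -cardT expnS.
move: (size (words j)) (#|Sigma| ^ j) sK => s K sK.
by apply: leq_trans (_ : #|Sigma| * s.+1 <= _); rewrite ?leq_mul2l ?sK ?orbT // mulnS; lia.
Qed.

Variables (F : (seq Sigma -> Sigma) -> Prop) (T : nat) (S : seq (seq Sigma)).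

(* The strings read by a [T]-step chain of thought started at a point of [S]. *)
Definition queries := undup [seq x ++ w | x <- S, w <- words T].

Local Notation n := (size queries).

Definition pattern (f : seq Sigma -> Sigma) : n.-tuple Sigma :=
  map_tuple f (in_tuple queries).

Definition patterns := [set t | `[< exists2 f, F f & t = pattern f >]].

Lemma patternsP t : reflect (exists2 f, F f & t = pattern f) (t \in patterns).
Proof. by rewrite inE; apply: asboolP. Qed.

Definition decode (y0 : Sigma) (t : n.-tuple Sigma) (z : seq Sigma) : Sigma :=
  nth y0 t (index z queries).

Lemma mem_queries x w : x \in S -> size w < T -> x ++ w \in queries.
Proof. by move=> xS sw; rewrite mem_undup; apply: allpairs_f => //; apply: mem_words. Qed.

Lemma size_queries : 1 < #|Sigma| -> n <= size S * #|Sigma| ^ T.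
Proof.
move=> k2; apply: leq_trans (size_undup _) _.
by rewrite size_allpairs leq_mul2l ltnW ?size_words ?orbT.
Qed.

Lemma decode_pattern y0 f z : z \in queries -> decode y0 (pattern f) z = f z.
Proof. by move=> zQ; rewrite /decode (nth_map [::]) ?index_mem ?nth_index. Qed.

Lemma patterns_Nshatters I :
  tuple_Nshatters patterns I -> N_shatters F [seq tnth (in_tuple queries) i | i <- enum I].
Proof.
case=> h0 [h1 [h01 shA]].
have [_ /patternsP[f0 F0 ->] f0h0] := shA setT.
have [_ /patternsP[f1 F1 ->] f1h1] := shA set0.
exists f0, f1; split=> [_ /mapP[i + ->] | U].
  rewrite mem_enum => iI; have := f0h0 i iI; have := f1h1 i iI.
  by rewrite !tnth_map !inE => -> ->; apply: h01.
have [_ /patternsP[f Ff ->] fU] := shA [set i | U (tnth (in_tuple queries) i)].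
exists f; split=> //; split=> _ /mapP[i + ->]; rewrite mem_enum => iI Ui.
  by have := fU i iI; have := f0h0 i iI; rewrite !tnth_map !inE Ui => -> ->.
by have := fU i iI; have := f1h1 i iI; rewrite !tnth_map !inE (negbTE Ui) => -> ->.
Qed.

Lemma Ndim_patterns d : Ndim_le F d -> forall I, tuple_Nshatters patterns I -> #|I| < d.+1.
Proof.
move=> Fd I /patterns_Nshatters/Fd; rewrite size_map -cardE ltnS; apply.
rewrite map_inj_uniq ?enum_uniq //; apply/tuple_uniqP; exact: undup_uniq.
Qed.

Lemma card_patterns_ge : 0 < T -> uniq S -> N_shatters (e2e_class F T) S ->
  2 ^ size S <= #|patterns|.
Proof.
move=> T0 uS [g0 [g1 [g01 shS]]]; pose St := in_tuple S.
have St_inj : injective (tnth St) by apply/tuple_uniqP.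
pose label (U : {set 'I_(size S)}) : (size S).-tuple Sigma :=
  [tuple if i \in U then g0 (tnth St i) else g1 (tnth St i) | i < size S].
pose run (t : n.-tuple Sigma) := map_tuple (e2e (decode (g0 [::]) t) T) St.
have label_inj : injective label.
  move=> U V /(congr1 (fun t => tnth t _)) UV; apply/setP => i; have := UV i.
  rewrite !tnth_mktuple; have := g01 _ (mem_tnth i St).
  by case: (i \in U); case: (i \in V) => // g01i /esym.
have label_run : label @: powerset setT \subset run @: patterns.
  apply/subsetP => _ /imsetP[U _ ->].
  have [_ [[f [Ff ->]] [fU fnU]]] := shS [pred x | [exists j in U, tnth St j == x]].
  apply/imsetP; exists (pattern f); first by apply/patternsP; exists f.
  apply: eq_from_tnth => i; rewrite tnth_mktuple tnth_map.
  have -> : e2e (decode (g0 [::]) (pattern f)) T (tnth St i) = e2e f T (tnth St i).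
    by apply: e2e_local => // w sw; rewrite decode_pattern ?mem_queries ?mem_tnth.
  have inU : [exists j in U, tnth St j == tnth St i] = (i \in U).
    apply/existsP/idP => [[j /andP[jU /eqP/St_inj <-]] // | iU].
    by exists i; rewrite iU eqxx.
  by case: ifP => iU; [rewrite fU | rewrite fnU]; rewrite ?mem_tnth //= inU iU.
rewrite -[size S]card_ord -cardsT -card_powerset -(card_imset _ label_inj).
exact: leq_trans (subset_leq_card label_run) (leq_imset_card _ _).
Qed.

End Patterns.

Lemma e2e_Nshatters_card_bound (Sigma : finType) (F : (seq Sigma -> Sigma) -> Prop)
    (T d K : nat) (S : seq (seq Sigma)) :
  #|pairs Sigma| <= K -> 1 < #|Sigma| -> 0 < T -> Ndim_le F d ->
  uniq S -> N_shatters (e2e_class F T) S ->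
  2 ^ size S <= natarajan_bound K (size S * #|Sigma| ^ T) d.+1.
Proof.
move=> HK k2 T0 Fd uS shS; apply: leq_trans (card_patterns_ge T0 uS shS) _.
apply: leq_trans (card_le_natarajan_bound HK (Ndim_patterns Fd)) _.
exact: leq_natarajan_bound (size_queries T S k2).
Qed.

Section RealBounds.
Local Open Scope R_scope.

Lemma INR_muln a b : INR (a * b)%N = INR a * INR b.
Proof. exact: mult_INR. Qed.

Lemma INR_expn a b : INR (a ^ b)%N = INR a ^ b.
Proof. by elim: b => // b IH; rewrite expnS INR_muln IH. Qed.

Lemma INR2 : INR 2 = 2.
Proof. by rewrite /=; lra. Qed.

Lemma ln_le x y : 0 < x -> x <= y -> ln x <= ln y.
Proof. by move=> x0 [xy | <-]; [left; apply: ln_increasing | right]. Qed.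

Lemma ln_le_sub1 x : 0 < x -> ln x <= x - 1.
Proof. by move=> x0; have := exp_ineq1_le (ln x); rewrite exp_ln //; lra. Qed.

Lemma ln2_lt1 : ln 2 < 1.
Proof.
rewrite -[X in _ < X]ln_exp; apply: ln_increasing; first lra.
by have := exp_ineq1 1; lra.
Qed.

(* [ln 2 = 1 + (ln 2 - 1) <= exp (ln 2 - 1) = 2 / e]. *)
Lemma exp1_ln2_le2 : exp 1 * ln 2 <= 2.
Proof.
have e0 := exp_pos 1; have := exp_ineq1_le (ln 2 - 1).
rewrite /Rminus exp_plus exp_Ropp exp_ln; last lra.
move=> ln2_le; apply: (Rle_trans _ (exp 1 * (2 * / exp 1))).
  by apply: Rmult_le_compat_l; lra.
by right; field; lra.
Qed.

Lemma natarajan_bound_pow K x n D : 0 < x <= 1 ->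
  INR (natarajan_bound K n D.+1) * x ^ D <= (1 + INR K * x) ^ n.
Proof.
move=> x01; have Kx0 : 0 <= INR K * x by have := pos_INR K; nra.
elim: n D => [|n IH] D.
  by rewrite /= Rmult_1_l -(pow1 D); apply: pow_incr; lra.
case: D => [|D].
  by rewrite natarajan_bound1 /= Rmult_1_r; have := pow_R1_Rle (1 + INR K * x) n; nra.
change (natarajan_bound K n.+1 D.+2)
  with (natarajan_bound K n D.+2 + K * natarajan_bound K n D.+1)%N.
have := IH D.+1; have := IH D; have := pow_le (1 + INR K * x) n.
rewrite plus_INR INR_muln /=; nra.
Qed.

Lemma natarajan_bound_ln m d K N : (2 ^ m <= natarajan_bound K N d.+1)%N ->
  (0 < K)%N -> (0 < d <= K * N)%N ->
  INR m * ln 2 <= INR d * (1 + ln (INR K * INR N / INR d)).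
Proof.
move=> /leP/le_INR count /ltP/lt_0_INR K0 /andP[/ltP/lt_0_INR d0 /leP/le_INR].
rewrite INR_muln INR_expn in count * => dKN; set y := INR K * INR N / INR d.
have yd : y * INR d = INR K * INR N by rewrite /y; field; lra.
have y1 : 1 <= y by nra.
have N0 : 0 < INR N by nra.
have Kx_d : INR N * (INR K * / y) = INR d by rewrite /y; field; lra.
have x01 : 0 < / y <= 1.
  by split; [apply: Rinv_0_lt_compat; lra | rewrite -Rinv_1; apply: Rinv_le_contravar; lra].
have xd0 : 0 < (/ y) ^ d by apply: pow_lt; lra.
have base0 : 0 < 1 + INR K * / y by nra.
have : 2 ^ m * (/ y) ^ d <= (1 + INR K * / y) ^ N.
  apply: Rle_trans (natarajan_bound_pow K N d x01).
  by apply: Rmult_le_compat_r; [lra | rewrite -INR2].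
move/(ln_le (Rmult_lt_0_compat _ _ (pow_lt 2 m ltac:(lra)) xd0)).
rewrite ln_mult ?ln_pow ?ln_Rinv; try (by apply: pow_lt; lra); try lra.
have := ln_le_sub1 base0; have := pos_INR N; nra.
Qed.

(* [ln y <= y - 1] at [y = m / (4 d)]. *)
Lemma ln_ratio_bound m d : 0 < m -> 0 < d -> d * (1 + ln (m / d)) <= m / 4 + 2 * d * ln 2.
Proof.
move=> m0 d0; have q0 : 0 < m / d by apply: Rdiv_lt_0_compat.
have := @ln_le_sub1 (m / d * / 2 * / 2) ltac:(nra).
rewrite !ln_mult ?ln_Rinv; try nra.
have md : d * (m / d * / 2 * / 2) = m / 4 by field; lra.
move=> h; have := Rmult_le_compat_l d _ _ (Rlt_le _ _ d0) h; lra.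
Qed.

Lemma shatter_ln_bound m d K k T : (2 ^ m <= natarajan_bound K (m * k ^ T) d.+1)%N ->
  (0 < K)%N -> (0 < k)%N -> (d < m)%N ->
  INR m * (ln 2 - / 4) <= INR d * (2 * ln 2 + ln (INR K) + INR T * ln (INR k)).
Proof.
move=> count K0 k0 dm.
have d0 : (0 < d)%N.
  case: d dm count => // dm; rewrite natarajan_bound1 -(expn0 2) leq_exp2l // leqn0.
  by move/eqP=> m0; rewrite m0 in dm.
have dKN : (d <= K * (m * k ^ T))%N.
  by rewrite (leq_trans (ltnW dm)) // mulnCA leq_pmulr // muln_gt0 K0 expn_gt0 k0.
have := natarajan_bound_ln count K0 (introT andP (conj d0 dKN)).
have [/ltP/lt_0_INR Kp /ltP/lt_0_INR kp] := (K0, k0).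
have mp : 0 < INR m by apply: lt_0_INR; apply/ltP; apply: leq_ltn_trans dm.
have dp : 0 < INR d by apply: lt_0_INR; apply/ltP.
have ktp : 0 < INR k ^ T by apply: pow_lt.
have -> : INR K * INR (m * k ^ T) / INR d = INR K * INR k ^ T * (INR m / INR d).
  by rewrite INR_muln INR_expn; field; lra.
rewrite ln_mult; [|nra|exact: Rdiv_lt_0_compat].
rewrite ln_mult ?ln_pow //; have := ln_ratio_bound mp dp; nra.
Qed.

Lemma le_6Td_of_ln2_ineq m d T : 1 <= T -> 0 <= d ->
  m * (ln 2 - / 4) <= d * (2 * ln 2 + T * ln 2) -> m <= 6 * T * d.
Proof.
move=> T1 d0 h; have := ln_lt_2; have := ln2_lt1 => u1 u2.
have : 0 <= d * ((ln 2 - / 2) * (5 * T - 2) + (T - 1)) by apply: Rmult_le_pos; nra.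
move=> key; apply: (Rmult_le_reg_r (ln 2 - / 4)); nra.
Qed.

Lemma le_9TdL_of_ln2_ineq m d T L C : 1 <= T -> 0 <= d -> 1 <= L -> C <= 2 * L ->
  m * (ln 2 - / 4) <= d * (2 * ln 2 + C + T * L) -> m * ln 2 <= 9 * T * d * L.
Proof.
move=> T1 d0 L1 CL h0.
have h : m * (ln 2 - / 4) <= d * (2 * ln 2 + (T + 2) * L).
  by apply: Rle_trans h0 _; apply: Rmult_le_compat_l => //; lra.
have := ln_lt_2; have := ln2_lt1 => u1 u2.
have h2 : 0 <= (L - 1) * (8 * T * ln 2 - 2 * ln 2 - 9 * T / 4) by apply: Rmult_le_pos; nra.
have key : ln 2 * (2 * ln 2 + (T + 2) * L) <= 9 * T * L * (ln 2 - / 4) by nra.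
apply: (Rmult_le_reg_r (ln 2 - / 4)); first lra.
have := Rmult_le_compat_r (ln 2) _ _ ltac:(lra) h.
have := Rmult_le_compat_l d _ _ d0 key; nra.
Qed.

Lemma ln_div_ln2_le_log2 d k : 1 <= d -> 0 < k ->
  ln k / ln 2 <= log2 (2 * d * k / (exp 1 * ln 2)).
Proof.
move=> d1 k0; have := ln_lt_2; have := exp1_ln2_le2; have := exp_pos 1 => e0 e2 u.
apply: Rmult_le_compat_r; first by left; apply: Rinv_0_lt_compat; lra.
apply: ln_le => //; apply: (Rmult_le_reg_r (exp 1 * ln 2)); first nra.
rewrite /Rdiv Rmult_assoc Rinv_l; nra.
Qed.

End RealBounds.

Section BinaryShattering.
Variable X : eqType.

Lemma VC_shatters_N_shatters (H : (X -> bool) -> Prop) S : VC_shatters H S -> N_shatters H S.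
Proof.
move=> shS; exists (fun _ => true), (fun _ => false); split=> // U.
have [h [Hh hU]] := shS U; exists h; split=> //.
by split=> x xS Ux; rewrite hU //; apply/negbTE.
Qed.

Lemma N_shatters_VC_shatters (H : (X -> bool) -> Prop) S : N_shatters H S -> VC_shatters H S.
Proof.
case=> h0 [h1 [h01 shS]] U; have [h [Hh [h0U h1U]]] := shS [pred x | U x == h0 x].
exists h; split=> // x xS; case: (boolP (U x == h0 x)) => Uh0.
  by rewrite (eqP Uh0); apply: h0U.
by rewrite h1U //; move: (h01 x xS) Uh0; case: (U x) (h0 x) (h1 x) => [] [] [].
Qed.

Lemma VCdim_le_Ndim_le (H : (X -> bool) -> Prop) d : VCdim_le H d -> Ndim_le H d.
Proof. by move=> Hd S uS /N_shatters_VC_shatters; apply: Hd. Qed.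

End BinaryShattering.

Lemma e2e_VCdim_bound (F : (seq bool -> bool) -> Prop) T d :
  0 < T -> VCdim_le F d -> VCdim_le (e2e_class F T) (6 * T * d).
Proof.
move=> T0 /VCdim_le_Ndim_le Fd S uS /VC_shatters_N_shatters shS.
have K1 : #|pairs bool| <= 1 by rewrite card_pairs card_bool.
have k2 : 1 < #|{: bool}| by rewrite card_bool.
have := e2e_Nshatters_card_bound K1 k2 T0 Fd uS shS.
rewrite card_bool => count; case: (leqP (size S) d) => [Sd | dS].
  by rewrite (leq_trans Sd) //; nia.
have := shatter_ln_bound count (ltn0Sn 0) (ltn0Sn 1) dS.
rewrite INR_1 ln_1 Rplus_0_r INR2 => bound; apply/leP/INR_le.
rewrite !INR_muln [INR 6]INR_IZR_INZ.
by apply: le_6Td_of_ln2_ineq => //; [apply: (le_INR 1); apply/leP | apply: pos_INR].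
Qed.

Lemma shatter_ln_bound_pairs m d T k : (0 < T)%N -> (2 < k)%N ->
  (2 ^ m <= natarajan_bound 'C(k, 2) (m * k ^ T) d.+1)%N ->
  (INR m * ln 2 <= 9 * INR T * INR d * ln (INR k))%R.
Proof.
move=> T0 k2 count; have u := ln_lt_2.
have T1 : (1 <= INR T)%R by apply: (le_INR 1); apply/leP.
have k3 : (3 <= INR k)%R by have := le_INR 3 k (leP k2); rewrite [INR 3]INR_IZR_INZ.
have lnk1 : (1 <= ln (INR k))%R.
  by rewrite -[1%R]ln_exp; apply: ln_le; have := exp_le_3; have := exp_pos 1; lra.
have CK : (0 < 'C(k, 2))%N by rewrite bin_gt0 ltnW.
case: (leqP m d) => [/leP/le_INR md | dm].
  have dlnk : (0 <= INR d * ln (INR k))%R by apply: Rmult_le_pos; [apply: pos_INR | lra].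
  apply: (Rle_trans _ (INR d * ln (INR k))); last nra.
  by apply: Rmult_le_compat => //; [apply: pos_INR | lra | apply: ln_le; lra].
apply: le_9TdL_of_ln2_ineq (shatter_ln_bound count CK (ltnW (ltnW k2)) dm) => //.
  exact: pos_INR.
rewrite -INR2 -ln_pow; last lra.
apply: ln_le; first by apply: lt_0_INR; apply/ltP.
by rewrite -INR_expn; apply/le_INR/leP; rewrite bin2; lia.
Qed.

Lemma e2e_Ndim_bound (Sigma : finType) (F : (seq Sigma -> Sigma) -> Prop) T d :
  0 < T -> 2 < #|Sigma| -> Ndim_le F d ->
  forall S, uniq S -> N_shatters (e2e_class F T) S ->
  (INR (size S) <= 9 * INR T * INR d * log2 (2 * INR d * INR #|Sigma| / (exp 1 * ln 2)))%R.
Proof.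
move=> T0 k2 Fd S uS shS; have u := ln_lt_2.
have := e2e_Nshatters_card_bound (eq_leq (card_pairs _)) (ltnW k2) T0 Fd uS shS.
move/(shatter_ln_bound_pairs T0 k2); case: d => [|d] in Fd *.
  rewrite [INR 0]/= !Rmult_0_r !Rmult_0_l => mk.
  by apply: (Rmult_le_reg_r (ln 2)); [lra | rewrite Rmult_0_l].
have d1 : (1 <= INR d.+1)%R by apply: (le_INR 1); apply/leP.
have k0 : (0 < INR #|Sigma|)%R by apply: lt_0_INR; apply/ltP; apply: leq_trans k2.
move=> mk; apply: (Rle_trans _ (9 * INR T * INR d.+1 * (ln (INR #|Sigma|) / ln 2))).
  apply: (Rmult_le_reg_r (ln 2)); first lra.
  by rewrite /Rdiv !Rmult_assoc Rinv_l ?Rmult_1_r; [rewrite -!Rmult_assoc | lra].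
apply: Rmult_le_compat_l; last exact: ln_div_ln2_le_log2.
by have := pos_INR T; have := pos_INR d.+1; nra.
Qed.

Theorem theoremB1 :
  (* binary alphabet Sigma = {0,1} *)
  (forall (F : (seq bool -> bool) -> Prop) (T d : nat),
      (0 < T)%N ->
      VCdim_eq F d ->
      VCdim_le (e2e_class F T) (6 * T * d))
  /\
  (* non-binary finite alphabet *)
  (forall (Sigma : finType) (F : (seq Sigma -> Sigma) -> Prop) (T d : nat),
      (0 < T)%N ->
      (2 < #|Sigma|)%N ->
      Ndim_eq F d ->
      forall S : seq (seq Sigma), uniq S -> N_shatters (e2e_class F T) S ->
        (INR (size S) <=
           9 * INR T * INR d *
           log2 (2 * INR d * INR #|Sigma| / (exp 1 * ln 2)))%R).
Proof.
split=> [F T d T0 [_ Fd] | Sigma F T d T0 k2 [_ Fd]].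
  exact: e2e_VCdim_bound.
exact: e2e_Ndim_bound.
Qed.
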